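(* Let $M>0$, let $f:[0,1]\to\mathbb{R}$ satisfy $|f(x)-f(y)|\le M|x-y|$ for all $x,y\in[0,1]$, and let $g(x)=f(x)\bmod 1\in[0,1)$. Let $n\ge2$ be an integer and $x_i=\frac{i-1}{n-1}$ for $i=1,\dots,n$. Let $\delta\in[0,1/2]$ and let $\hat g:[0,1]\to[0,1)$ satisfy $d_w(\hat g(x_i),g(x_i))\le\delta$ for all $i$. Define $\tilde f(x_1)=\hat g(x_1)$ and, for $i=2,\dots,n$, $$\tilde f(x_i)=\tilde f(x_{i-1})+\begin{cases}\hat g(x_i)-\hat g(x_{i-1}) & \text{if } |\hat g(x_i)-\hat g(x_{i-1})|<1/2,\\ 1+\hat g(x_i)-\hat g(x_{i-1}) & \text{if } \hat g(x_i)-\hat g(x_{i-1})<-1/2,\\ -1+\hat g(x_i)-\hat g(x_{i-1}) & \text{if } \hat g(x_i)-\hat g(x_{i-1})>1/2.\end{cases}$$ If $2\delta+\frac{M}{n-1}<\frac12$, then there exists $q^\star\in\mathbb{Z}$ such that $|\tilde f(x_i)+q^\star-f(x_i)|\le\delta$ for all $i=1,\dots,n$.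
   Context: For $a\in\mathbb{R}$, $a\bmod 1\in[0,1)$ denotes $a-\lfloor a\rfloor$. The wrap-around distance on $[0,1)$ is $d_w(a,b)=\min(|a-b|,1-|a-b|)$. *)

From Stdlib Require Import Reals Lra Lia.
Open Scope R_scope.

(* a mod 1 = a - floor a ; Int_part a = up a - 1 = floor a *)
Definition mod1 (a : R) : R := a - IZR (Int_part a).

Definition dw (a b : R) : R := Rmin (Rabs (a - b)) (1 - Rabs (a - b)).

(* grid point x_{i+1} = i/(n-1), 0-based index i = 0..n-1 *)
Definition grid (n i : nat) : R := INR i / INR (n - 1).

Definition unwrap_step (d : R) : R :=
  if Rlt_dec (Rabs d) (1/2) then d
  else if Rlt_dec d (-(1/2)) then 1 + d
  else if Rlt_dec (1/2) d then -1 + d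
  else d. (* |d| = 1/2 exactly: not covered by the paper; irrelevant under hypotheses *)

Fixpoint ftilde (ghat : R -> R) (n : nat) (i : nat) : R :=
  match i with
  | O => ghat (grid n 0)
  | S j => ftilde ghat n j + unwrap_step (ghat (grid n (S j)) - ghat (grid n j))
  end.

(* Each sample ghat(x_i) has an integer lift ghat(x_i) + k_i within delta of f(x_i).  Two
   consecutive lifts differ by less than 2 delta + M/(n-1) < 1/2, while the
   raw difference ghat(x_i) - ghat(x_{i-1}) lies in (-1, 1); so the unwrapping rule picks
   exactly the integer shift k_i - k_{i-1}.  By induction, ftilde(x_i) + k_1 is the lift
   ghat(x_i) + k_i, and q* = k_1 works. *)
From Stdlib Require Import Reals ZArith Lra Lia.
Open Scope R_scope.

Lemma Rabs_le_bounds (x a : R) : Rabs x <= a -> - a <= x <= a.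
Proof.
  intros H; pose proof (Rle_abs x); pose proof (Rle_abs (- x)) as Hopp.
  rewrite Rabs_Ropp in Hopp; lra.
Qed.

Lemma IZR_open_interval (lo hi K : Z) : IZR lo < IZR K < IZR hi -> (lo < K < hi)%Z.
Proof.
  intros [Hlo Hhi]; split; apply lt_IZR; assumption.
Qed.

Lemma unwrap_step_shift (d : R) (K : Z) :
  Rabs d < 1 -> Rabs (d + IZR K) < 1/2 -> unwrap_step d = d + IZR K.
Proof.
  intros Hd HK.
  apply Rabs_def2 in Hd as [Hd_hi Hd_lo]; apply Rabs_def2 in HK as [HK_hi HK_lo].
  unfold unwrap_step.
  destruct (Rlt_dec (Rabs d) (1/2)) as [Hsmall|Hbig].
  { apply Rabs_def2 in Hsmall.
    pose proof (IZR_open_interval (-1) 1 K ltac:(lra)).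
    replace K with 0%Z by lia; lra. }
  destruct (Rlt_dec d (-(1/2))) as [Hneg|Hnot_neg].
  { pose proof (IZR_open_interval 0 2 K ltac:(lra)).
    replace K with 1%Z by lia; lra. }
  destruct (Rlt_dec (1/2) d) as [Hpos|Hnot_pos].
  { pose proof (IZR_open_interval (-2) 0 K ltac:(lra)).
    replace K with (-1)%Z by lia; lra. }
  (* here |d| = 1/2, so no integer shift brings d strictly inside (-1/2, 1/2) *)
  exfalso.
  destruct (Rle_lt_dec 0 d) as [Hd0|Hd0].
  - rewrite Rabs_pos_eq in Hbig by lra.
    pose proof (IZR_open_interval (-1) 0 K ltac:(lra)); lia.
  - rewrite Rabs_left in Hbig by lra.
    pose proof (IZR_open_interval 0 1 K ltac:(lra)); lia.
Qed.

Lemma unwrap_step_lift (a a' b b' delta L : R) (k k' : Z) :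
  0 <= a < 1 -> 0 <= a' < 1 ->
  Rabs (a + IZR k - b) <= delta -> Rabs (a' + IZR k' - b') <= delta ->
  Rabs (b' - b) <= L -> 2 * delta + L < 1/2 ->
  unwrap_step (a' - a) = (a' + IZR k') - (a + IZR k).
Proof.
  intros Ha Ha' Hk Hk' Hb Hsmall.
  apply Rabs_le_bounds in Hk, Hk', Hb.
  rewrite (unwrap_step_shift _ (k' - k)); rewrite ?minus_IZR.
  - ring.
  - apply Rabs_def1; lra.
  - apply Rabs_def1; lra.
Qed.

Lemma dw_mod1_lift (a b delta : R) :
  0 <= a < 1 -> dw a (mod1 b) <= delta -> exists k : Z, Rabs (a + IZR k - b) <= delta.
Proof.
  intros Ha Hdw.
  destruct (base_Int_part b) as [Hfloor_le Hfloor_gt].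
  unfold dw, mod1 in Hdw; set (z := Int_part b) in *.
  set (x := a - (b - IZR z)) in Hdw.
  unfold Rmin in Hdw; destruct (Rle_dec _ _) as [_|_].
  - exists z; replace (a + IZR z - b) with x by (unfold x; ring); exact Hdw.
  - destruct (Rle_lt_dec 0 x) as [Hx|Hx].
    + rewrite Rabs_pos_eq in Hdw by exact Hx.
      exists (z - 1)%Z; rewrite minus_IZR; apply Rabs_le; unfold x in *; lra.
    + rewrite Rabs_left in Hdw by exact Hx.
      exists (z + 1)%Z; rewrite plus_IZR; apply Rabs_le; unfold x in *; lra.
Qed.

Lemma grid_in_unit (n i : nat) : (2 <= n)%nat -> (i < n)%nat -> 0 <= grid n i <= 1.
Proof.
  intros Hn Hi; unfold grid, Rdiv.
  assert (Hpos : 0 < INR (n - 1)) by (apply lt_0_INR; lia).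
  assert (Hi_le : INR i <= INR (n - 1)) by (apply le_INR; lia).
  pose proof (Rinv_0_lt_compat _ Hpos).
  pose proof (Rinv_r (INR (n - 1)) ltac:(lra)).
  pose proof (pos_INR i).
  split; nra.
Qed.

Lemma grid_succ_sub (n i : nat) : (2 <= n)%nat -> grid n (S i) - grid n i = 1 / INR (n - 1).
Proof.
  intros Hn; assert (0 < INR (n - 1)) by (apply lt_0_INR; lia).
  unfold grid; rewrite S_INR; field; lra.
Qed.

Lemma lipschitz_grid_step (M : R) (f : R -> R) (n i : nat) :
  (forall x y, 0 <= x <= 1 -> 0 <= y <= 1 -> Rabs (f x - f y) <= M * Rabs (x - y)) ->
  (2 <= n)%nat -> (S i < n)%nat ->
  Rabs (f (grid n (S i)) - f (grid n i)) <= M / INR (n - 1).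
Proof.
  intros Hlip Hn Hi.
  assert (0 < INR (n - 1)) by (apply lt_0_INR; lia).
  eapply Rle_trans; [apply Hlip; apply grid_in_unit; lia|].
  rewrite grid_succ_sub, Rabs_pos_eq by (auto; apply Rlt_le, Rdiv_lt_0_compat; lra).
  right; field; lra.
Qed.

Lemma ftilde_tracks_lift (ghat : R -> R) (F : nat -> R) (n : nat) (delta L : R) (q : Z) :
  2 * delta + L < 1/2 ->
  (forall i, (i < n)%nat -> 0 <= ghat (grid n i) < 1) ->
  (forall i, (i < n)%nat -> exists k : Z, Rabs (ghat (grid n i) + IZR k - F i) <= delta) ->
  (forall i, (S i < n)%nat -> Rabs (F (S i) - F i) <= L) ->
  Rabs (ghat (grid n 0) + IZR q - F 0%nat) <= delta ->
  forall i, (i < n)%nat -> Rabs (ftilde ghat n i + IZR q - F i) <= delta.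
Proof.
  intros Hsmall Hg Hlift HF Hq.
  enough (Hinv : forall i, (i < n)%nat -> exists k : Z,
             Rabs (ghat (grid n i) + IZR k - F i) <= delta /\
             ftilde ghat n i + IZR q = ghat (grid n i) + IZR k).
  { intros i Hi; destruct (Hinv i Hi) as (k & Hk & ->); exact Hk. }
  induction i as [|i IH]; intros Hi.
  - exists q; split; [exact Hq | reflexivity].
  - destruct (IH ltac:(lia)) as (k & Hk & Hft).
    destruct (Hlift (S i) Hi) as [k' Hk'].
    exists k'; split; [exact Hk'|].
    cbn [ftilde].
    rewrite (unwrap_step_lift _ _ (F i) (F (S i)) delta L k k'); auto with arith.
    lra.
Qed.

Theorem mainTheorem2 (M : R) (f ghat : R -> R) (n : nat) (delta : R) :
  0 < M ->
  (forall x y, 0 <= x <= 1 -> 0 <= y <= 1 -> Rabs (f x - f y) <= M * Rabs (x - y)) ->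
  (2 <= n)%nat ->
  0 <= delta <= 1/2 ->
  (forall x, 0 <= x <= 1 -> 0 <= ghat x < 1) ->
  (forall i, (i < n)%nat -> dw (ghat (grid n i)) (mod1 (f (grid n i))) <= delta) ->
  2 * delta + M / INR (n - 1) < 1/2 ->
  exists q : Z, forall i, (i < n)%nat ->
    Rabs (ftilde ghat n i + IZR q - f (grid n i)) <= delta.
Proof.
  intros _ Hlip Hn _ Hg Hdw Hsmall.
  assert (Hg_grid : forall i, (i < n)%nat -> 0 <= ghat (grid n i) < 1)
    by (intros i Hi; apply Hg, grid_in_unit; assumption).
  assert (Hlift : forall i, (i < n)%nat ->
            exists k : Z, Rabs (ghat (grid n i) + IZR k - f (grid n i)) <= delta)
    by (intros i Hi; apply dw_mod1_lift; auto).
  destruct (Hlift 0%nat ltac:(lia)) as [q Hq].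
  exists q.
  apply (ftilde_tracks_lift ghat (fun i => f (grid n i)) n delta (M / INR (n - 1)) q);
    auto.
  intros i Hi; apply lipschitz_grid_step; assumption.
Qed.
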